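(* Let $G$ be a fullerene graph and $S$ a perfect star packing of $G$. Then the number of connected components of $G-C(S)$ that are cycles of odd length is even.
   Context: A fullerene graph is a finite simple connected (equivalently, $3$-connected) plane cubic graph all of whose faces are pentagons or hexagons. A perfect star packing of $G$ is a spanning subgraph $S$ of $G$ every connected component of which is isomorphic to $K_{1,3}$; $C(S)$ denotes the set of centers (degree-$3$ vertices) of the stars in $S$. (Every connected component of $G-C(S)$ is a cycle.) *)

From mathcomp Require Import all_boot.
Set Implicit Arguments. Unset Strict Implicit. Unset Printing Implicit Defensive.

Definition simple_graph (V : finType) (adj : rel V) :=
  symmetric adj /\ irreflexive adj.

Definition connected_graph (V : finType) (adj : rel V) :=
  forall u v : V, connect adj u v.

Definition cubic (V : finType) (adj : rel V) :=
  forall u : V, #|[pred v | adj u v]| = 3.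

(* Plane embeddings via rotation systems: rot u cyclically permutes the
   neighbours of u.  Darts are ordered pairs (u,v) with adj u v. *)
Definition darts (V : finType) (adj : rel V) : {set V * V} :=
  [set d : V * V | adj d.1 d.2].

Definition rotation_system (V : finType) (adj : rel V) (rot : V -> V -> V) :=
  (forall u v, adj u v -> adj u (rot u v)) /\
  (forall u v w, adj u v -> adj u w -> fconnect (rot u) v w).

Definition face_step (V : finType) (rot : V -> V -> V) (d : V * V) : V * V :=
  (d.2, rot d.2 d.1).

Definition face_of (V : finType) (rot : V -> V -> V) (d : V * V) : {set V * V} :=
  [set d' | fconnect (face_step rot) d d'].

Definition faces (V : finType) (adj : rel V) (rot : V -> V -> V) : {set {set V * V}} :=
  [set face_of rot d | d in darts adj].

(* Euler's formula V - E + F = 2 with 2E = #darts: genus 0 (sphere). *)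
Definition spherical (V : finType) (adj : rel V) (rot : V -> V -> V) :=
  (#|V| + #|faces adj rot|) * 2 = #|darts adj| + 4.

(* every face is bounded by a 5-cycle or a 6-cycle: the facial walk has
   length 5 or 6 and passes through pairwise distinct vertices *)
Definition pent_hex_faces (V : finType) (adj : rel V) (rot : V -> V -> V) :=
  forall d, d \in darts adj ->
    (#|face_of rot d| = 5 \/ #|face_of rot d| = 6) /\
    #|[set x.1 | x in face_of rot d]| = #|face_of rot d|.

Definition fullerene (V : finType) (adj : rel V) :=
  [/\ simple_graph adj, connected_graph adj, cubic adj &
      exists rot : V -> V -> V,
        [/\ rotation_system adj rot, spherical adj rot & pent_hex_faces adj rot]].

Definition is_K13 (V : finType) (s : rel V) (K : {set V}) :=
  #|K| = 4 /\
  exists2 c, c \in K &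
    forall y z, y \in K -> z \in K -> s y z = (y != z) && ((y == c) || (z == c)).

Definition perfect_star_packing (V : finType) (adj : rel V) (s : rel V) :=
  [/\ symmetric s, (forall x y, s x y -> adj x y) &
      forall x, is_K13 s [set y | connect s x y]].

Definition centers (V : finType) (s : rel V) : {set V} :=
  [set v | #|[pred w | s v w]| == 3].

Definition del_rel (V : finType) (adj : rel V) (C : {set V}) : rel V :=
  fun x y => [&& adj x y, x \notin C & y \notin C].

Definition components (V : finType) (r : rel V) (W : {set V}) : {set {set V}} :=
  [set [set y | connect r x y] | x in W].

Definition is_cycle (V : finType) (r : rel V) (K : {set V}) :=
  exists p : seq V, [/\ uniq p, 3 <= size p, K = [set x in p] &
    forall x y, x \in K -> y \in K -> r x y = (y == next p x) || (x == next p y)].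

From mathcomp Require Import all_boot zify.
Set Implicit Arguments. Unset Strict Implicit. Unset Printing Implicit Defensive.

(* Every vertex outside C(S) is a leaf adjacent to exactly one centre, so
   G - C(S) is 2-regular: its components are cycles, and the number of odd
   ones has the parity of the number of leaves.  For a leaf v let lnext v be
   the neighbour following its centre in the rotation at v, and w := lnext v.
   Either lnext w = v, and lnext pairs these leaves off, or v is the other
   non-centre neighbour of w.  In the second case the face through the dart
   (v, w) runs through the centre of w, the next leaf x around that centre and
   lnext x; a pentagon would make lnext x a centre, so the face is a hexagon
   closing through the centre of v, and read from x it leads back to v.  Thus
   v |-> x is an involution, fixed-point-free because the vertices of a face
   are distinct, and the number of leaves is even. *)

Lemma involution_card_even (T : finType) (A : {set T}) (f : T -> T) :
  {in A, forall x, f x \in A} -> {in A, involutive f} ->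
  {in A, forall x, f x != x} -> ~~ odd #|A|.
Proof.
elim: {A}_.+1 {-2}A (ltnSn #|A|) => // n IH A leA fA fK f_neq.
have [->|[x xA]] := set_0Vmem A; first by rewrite cards0.
have fxA := fA x xA; have fx_neq := f_neq x xA.
set B := A :\ x :\ f x.
have cardA : #|A| = #|B|.+2.
  by rewrite (cardsD1 x A) xA (cardsD1 (f x) (A :\ x)) in_setD1 fx_neq fxA.
have inB y : y \in B -> [/\ y != f x, y != x & y \in A] by rewrite !inE => /and3P.
rewrite cardA /= negbK; apply: IH => [|y /inB[y_fx y_x yA]|y /inB[_ _ yA]|y /inB[_ _ yA]].
- by move: leA; rewrite cardA; lia.
- rewrite !inE fA // andbT; apply/andP; split.
    by apply: contra y_x => /eqP/(congr1 f); rewrite !fK // => ->.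
  by apply: contra y_fx => /eqP <-; rewrite fK.
- exact: fK.
- exact: f_neq.
Qed.

Lemma odd_sum_card (T : finType) (A : {pred T}) (F : T -> nat) :
  odd (\sum_(i in A) F i) = odd #|[set i in A | odd (F i)]|.
Proof.
rewrite -sum1_card [in LHS]big_mkcond [in RHS]big_mkcond /=.
apply: (big_ind2 (fun m k => odd m = odd k)) => // [m1 k1 m2 k2 e1 e2|i _].
  by rewrite !oddD e1 e2.
by rewrite inE; case: (i \in A); case: (boolP (odd (F i))) => // /negbTE.
Qed.

Lemma partition_components (T : finType) (r : rel T) (W : {set T}) :
  connect_sym r -> closed r W -> partition (components r W) W.
Proof.
move=> r_sym W_closed.
have eqW : {in W & &, equivalence_rel (connect r)}.
  by move=> x y z _ _ _; split=> [|/(same_connect r_sym) ->].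
suff -> : components r W = equivalence_partition (connect r) W.
  exact: equivalence_partitionP.
apply: eq_in_imset => x xW; apply/setP => y; rewrite !inE.
case: (boolP (connect r x y)) => [xy|]; last by rewrite andbF.
by rewrite -(closed_connect W_closed xy) xW.
Qed.

Section TwoRegular.
Variables (T : finType) (r : rel T) (W : {set T}) (a b : T -> T).
Hypothesis r_sym : symmetric r.
Hypothesis r_irr : irreflexive r.
Hypothesis r_dom : forall v w, r v w -> v \in W.
Hypothesis rE : forall v, v \in W -> forall w, r v w = (w == a v) || (w == b v).
Hypothesis a_neq_b : forall v, v \in W -> a v != b v.

Lemma two_neighbours v m1 m2 y :
  r v m1 -> r v m2 -> m1 != m2 -> r v y -> y = m1 \/ y = m2.
Proof.
move=> rm1; have vW := r_dom rm1; move: rm1; rewrite !rE // => rm1 rm2 m12 ry.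
have := a_neq_b vW; rewrite eq_sym => ba; move: m12.
case/orP: ry => /eqP ->; case/orP: rm1 => /eqP ->; case/orP: rm2 => /eqP ->;
  rewrite ?eqxx //= => _; by [left | right].
Qed.

Definition other v u := if u == a v then b v else a v.

Variable x : T.
Hypothesis xW : x \in W.

Definition walk i := (iter i (fun e => (e.2, other e.2 e.1)) (x, a x)).1.

Lemma walkSS i : walk i.+2 = other (walk i.+1) (walk i).
Proof. by []. Qed.

Lemma walk_edge i : r (walk i) (walk i.+1).
Proof.
elim: i => [|i IH]; first by rewrite /walk /= rE // eqxx.
have wW : walk i.+1 \in W by apply: (r_dom (w := walk i)); rewrite r_sym.
by rewrite walkSS rE // /other; case: ifP => _; rewrite eqxx ?orbT.
Qed.

Lemma walk_in i : walk i \in W.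
Proof. exact: r_dom (walk_edge i). Qed.

Lemma walk_no_backtrack i : walk i.+2 != walk i.
Proof.
rewrite walkSS /other; have wW := walk_in i.+1.
have := walk_edge i; rewrite r_sym rE // => /orP[] /eqP ->.
  by rewrite eqxx eq_sym a_neq_b.
by rewrite [b _ == a _]eq_sym (negbTE (a_neq_b wW)) a_neq_b.
Qed.

Lemma walk_first_repeat : exists j, uniq (mkseq walk j) /\ walk j \in mkseq walk j.
Proof.
have not_uniq : exists n, ~~ uniq (mkseq walk n.+1).
  exists #|T|; apply/negP => /card_uniqP; rewrite size_mkseq => card_eq.
  by have := max_card (mem (mkseq walk #|T|.+1)); rewrite card_eq ltnn.
case: (ex_minnP not_uniq) => m not_uniq_m min_m; exists m.
have uniq_m : uniq (mkseq walk m).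
  case: m not_uniq_m min_m => [|m] _ min_m //.
  by apply/negPn/negP => /min_m; lia.
by split => //; move: not_uniq_m; rewrite mkseqS rcons_uniq uniq_m andbT negbK.
Qed.

Section FirstRepeat.
Variable j : nat.
Hypothesis walk_uniq : uniq (mkseq walk j).
Hypothesis walk_repeat : walk j \in mkseq walk j.

Lemma walk_inj i k : i < j -> k < j -> walk i = walk k -> i = k.
Proof. by move=> ij kj; move/mkseq_uniqP: walk_uniq; apply. Qed.

Lemma mem_walk_prefix z : (z \in mkseq walk j) = [exists t : 'I_j, z == walk t].
Proof.
apply/mapP/existsP => [[t]|[t /eqP ->]].
  by rewrite mem_iota add0n => /andP[_ tj] ->; exists (Ordinal tj).
by exists (nat_of_ord t) => //; rewrite mem_iota add0n ltn_ord.
Qed.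

Lemma mem_walk t : t < j -> walk t \in mkseq walk j.
Proof. by move=> tj; rewrite mem_walk_prefix; apply/existsP; exists (Ordinal tj). Qed.

(* Any earlier vertex other than the start already has both of its
   neighbours on the walk. *)
Lemma walk_period : walk j = walk 0.
Proof.
have [i ij ji] : exists2 i, i < j & walk j = walk i.
  by move: walk_repeat; rewrite mem_walk_prefix => /existsP[t /eqP]; exists t.
case: i ij ji => [//|i] ij ji.
have j_gt0 : 0 < j by lia.
have r_prev := walk_edge i; rewrite r_sym in r_prev.
have r_last := walk_edge j.-1; rewrite prednK // ji r_sym in r_last.
have fork : walk i != walk i.+2 by rewrite eq_sym walk_no_backtrack.
have [prev_eq|next_eq] := two_neighbours r_prev (walk_edge i.+1) fork r_last.
  by have := walk_inj (i := j.-1) (k := i) ltac:(lia) ltac:(lia) prev_eq; lia.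
have [i2j|i2j|i2j] := ltngtP i.+2 j.
- have := walk_inj (i := j.-1) (k := i.+2) ltac:(lia) i2j next_eq.
  move=> ji2; have j3 : j = i.+3 by lia.
  by move: (walk_no_backtrack i.+1); rewrite -j3 ji eqxx.
- lia.
- by move: (walk_edge i.+1); rewrite -next_eq -i2j /= r_irr.
Qed.

Local Notation p := (mkseq walk j).

Lemma period_ge3 : 3 <= j.
Proof.
have j_gt0 : 0 < j by move: walk_repeat; case: (j).
have [//|j_small|j2] := ltngtP 2 j.
- have j1 : j = 1 by lia.
  by move: (walk_edge 0); rewrite -j1 walk_period r_irr.
- by move: (walk_no_backtrack 0); rewrite j2 walk_period eqxx.
Qed.

Lemma next_walk t : t < j -> next p (walk t) = walk t.+1.
Proof.
move=> tj; have j3 := period_ge3.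
have idx : index (walk t) p = t.
  by rewrite -{1}(nth_mkseq (walk 0) walk tj) index_uniq // size_mkseq.
have pE : p = walk 0 :: [seq walk i | i <- iota 1 j.-1].
  by rewrite /mkseq -{1}(prednK (_ : 0 < j)) //; lia.
rewrite next_nth mem_walk // idx pE /=.
have [tj1|tj1|->] := ltngtP t j.-1.
- by rewrite (nth_map 0) ?size_iota // nth_iota.
- lia.
- by rewrite nth_default ?size_map ?size_iota // prednK ?walk_period //; lia.
Qed.

Lemma prev_walk t : t < j ->
  exists q, [/\ q \in p, r q (walk t), next p q = walk t & q != walk t.+1].
Proof.
move=> tj; have j3 := period_ge3; case: t tj => [|t] tj.
  exists (walk j.-1); split.
  - by apply: mem_walk; lia.
  - by rewrite -walk_period -[in walk j](prednK (_ : 0 < j)) ?walk_edge //; lia.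
  - by rewrite next_walk ?prednK ?walk_period //; lia.
  - by apply/eqP => /walk_inj; lia.
exists (walk t); split.
- by apply: mem_walk; lia.
- exact: walk_edge.
- by rewrite next_walk //; lia.
- by rewrite eq_sym walk_no_backtrack.
Qed.

Lemma walk_neighbour t y : t < j -> r (walk t) y ->
  exists2 q, q \in p & next p q = walk t /\ (y = walk t.+1 \/ y = q).
Proof.
move=> tj ry; have [q [qp rq next_q q_neq]] := prev_walk tj.
exists q => //; split => //; rewrite r_sym in rq.
by have [] := two_neighbours (walk_edge t) rq _ ry; [rewrite eq_sym | left | right].
Qed.

Lemma prefix_closed z y : z \in p -> r z y -> y \in p.
Proof.
rewrite mem_walk_prefix => /existsP[[t tj] /eqP -> /=] ry.
have [q qp [_ [->|-> //]]] := walk_neighbour tj ry.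
by rewrite -next_walk // mem_next mem_walk.
Qed.

Lemma connect_walk t : connect r x (walk t).
Proof.
elim: t => [|t IH]; first exact: connect0.
exact: connect_trans IH (connect1 (walk_edge t)).
Qed.

Lemma component_walk : [set y | connect r x y] = [set z in p].
Proof.
apply/setP => y; rewrite !inE; apply/idP/idP; last first.
  by rewrite mem_walk_prefix => /existsP[t /eqP ->]; apply: connect_walk.
case/connectP => q r_q ->.
have : x \in p by apply: (mem_walk (t := 0)); have := period_ge3; lia.
elim: q x r_q => //= y' q IH z /andP[rzy r_q] zp.
exact: IH r_q (prefix_closed zp rzy).
Qed.

Lemma component_walk_cycle : is_cycle r [set y | connect r x y].
Proof.
exists p; rewrite component_walk size_mkseq period_ge3; split => // z y.
rewrite !inE mem_walk_prefix => /existsP[[t tj] /eqP -> /=].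
rewrite mem_walk_prefix => /existsP[[u uj] /eqP -> /=].
apply/idP/orP => [ru|].
  have [q qp [next_q [->|->]]] := walk_neighbour tj ru.
    by left; rewrite next_walk.
  by right; rewrite next_q.
rewrite !next_walk // => -[] /eqP ->; last rewrite r_sym; exact: walk_edge.
Qed.

End FirstRepeat.

Lemma component_two_regular_cycle : is_cycle r [set y | connect r x y].
Proof.
have [j [walk_uniq walk_repeat]] := walk_first_repeat.
exact: (component_walk_cycle walk_uniq walk_repeat).
Qed.

End TwoRegular.

Section RotationSystem.
Variables (V : finType) (adj : rel V) (rot : V -> V -> V).
Hypothesis cub : cubic adj.
Hypothesis rs : rotation_system adj rot.

Lemma adj_rot v z : adj v z -> adj v (rot v z).
Proof. exact: rs.1. Qed.

Lemma fconnect_rot v z u : adj v z -> fconnect (rot v) z u = adj v u.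
Proof.
move=> avz; apply/idP/idP; last exact: rs.2.
move=> /iter_findex <-; elim: (findex _ _ _) => //= n IH.
exact: adj_rot.
Qed.

Lemma orbit_rot v z : adj v z -> orbit (rot v) z = [:: z; rot v z; rot v (rot v z)].
Proof.
move=> avz; rewrite /orbit /order.
suff -> : #|fconnect (rot v) z| = 3 by [].
by rewrite -(cub v); apply: eq_card => u; rewrite inE /= fconnect_rot.
Qed.

Lemma uniq_rot_orbit v z : adj v z -> uniq [:: z; rot v z; rot v (rot v z)].
Proof. by move=> avz; rewrite -orbit_rot ?orbit_uniq. Qed.

Lemma rot3K v z : adj v z -> rot v (rot v (rot v z)) = z.
Proof.
move=> avz; have := orbit_rot avz; rewrite /orbit => /(congr1 size).
rewrite size_traject => /= order3.
have /(orbitPcycle 2 4) : z \in fconnect (rot v) (rot v z).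
  by rewrite inE fconnect_rot // adj_rot.
by rewrite order3.
Qed.

Lemma mem_rot_orbit v z u : adj v z -> adj v u -> u \in [:: z; rot v z; rot v (rot v z)].
Proof. by move=> avz avu; rewrite -orbit_rot // -fconnect_orbit fconnect_rot. Qed.

Lemma rot_inj_adj v : {in adj v &, injective (rot v)}.
Proof. by move=> u u' avu avu' eq_rot; rewrite -(rot3K avu) -(rot3K avu') eq_rot. Qed.

Hypothesis adj_sym : symmetric adj.

Local Notation fs := (face_step rot).

Lemma face_step_dart d : d \in darts adj -> fs d \in darts adj.
Proof. by rewrite !inE => ad; apply: adj_rot; rewrite adj_sym. Qed.

Lemma iter_face_step_dart n d : d \in darts adj -> iter n fs d \in darts adj.
Proof. by move=> dD; elim: n => //= n; apply: face_step_dart. Qed.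

Lemma face_step_inj : {in darts adj &, injective fs}.
Proof.
move=> [u v] [u' v']; rewrite !inE /face_step /= => auv au'v' [vv']; subst v'.
by rewrite ![adj _ v]adj_sym in auv au'v' * => /(rot_inj_adj auv au'v') ->.
Qed.

Lemma iter_face_order d : d \in darts adj -> iter (order fs d) fs d = d.
Proof. by apply: iter_order_in; [exact: face_step_dart | exact: face_step_inj]. Qed.

Lemma card_face_of d : #|face_of rot d| = order fs d.
Proof. by apply: eq_card => d'; rewrite inE. Qed.

Hypothesis phf : pent_hex_faces adj rot.

Lemma face_vertex_neq d i k : d \in darts adj -> i < k < order fs d ->
  (iter i fs d).1 != (iter k fs d).1.
Proof.
move=> dD /andP[ik ko]; have io := ltn_trans ik ko.
have [_ /eqP card_fst] := phf dD.
apply: contraTneq ik => /(imset_injP card_fst) eq_iter.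
suff -> : i = k by rewrite ltnn.
have face_iter n : iter n fs d \in face_of rot d by rewrite inE fconnect_iter.
have /eqP := eq_iter (face_iter i) (face_iter k).
rewrite -(nth_traject _ io) -(nth_traject _ ko) nth_uniq ?size_traject //.
  by move/eqP.
exact: orbit_uniq.
Qed.

End RotationSystem.

Section StarPacking.
Variables (V : finType) (adj s : rel V).
Hypothesis adj_sym : symmetric adj.
Hypothesis adj_irr : irreflexive adj.
Hypothesis cub : cubic adj.
Hypothesis psp : perfect_star_packing adj s.

Local Notation C := (centers s).

Lemma star_component x : exists2 c, c \in C &
  (forall w, s c w = adj c w) /\
  forall y, connect s x y -> y != c -> y \notin C /\ forall w, s y w = (w == c).
Proof.
have [s_sym s_adj /(_ x) [K4 [c cK starE]]] := psp.
set K := [set y | connect s x y] in cK starE K4.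
have sE y w : y \in K -> s y w = [&& w \in K, y != w & (y == c) || (w == c)].
  move=> yK; case: (boolP (w \in K)) => [wK|wK]; first by rewrite starE.
  apply/negbTE; apply: contra wK; move: yK; rewrite !inE.
  by move=> xy syw; apply: connect_trans xy (connect1 syw).
have scE w : s c w = (w \in K :\ c).
  by rewrite sE // eqxx andbT in_setD1 andbC eq_sym.
have c3 : #|[pred w | s c w]| = 3.
  rewrite (eq_card (B := K :\ c)) => [|w]; last by rewrite inE /= scE.
  by move: K4; rewrite (cardsD1 c) cK => -[].
exists c; first by rewrite inE c3.
split => [w|y xy yc].
  apply/idP/idP => [/s_adj //|acw].
  have s_sub_adj : [pred w | s c w] \subset [pred w | adj c w].
    by apply/subsetP => u; rewrite !inE; apply: s_adj.
  have card_eq : #|[pred w | s c w]| = #|[pred w | adj c w]| by rewrite c3 cub.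
  by have := elimT (subset_cardP card_eq) s_sub_adj w; rewrite !inE acw.
have syE w : s y w = (w == c).
  have yK : y \in K by rewrite inE.
  rewrite sE // (negbTE yc) /=.
  by case: (eqVneq w c) => [->|]; rewrite ?andbF // cK yc.
by split => //; rewrite inE (@eq_card _ _ (pred1 c) syE) card1.
Qed.

Lemma center_star c : c \in C ->
  (forall w, s c w = adj c w) /\ forall w, adj c w -> w \notin C.
Proof.
move=> cC; have [c' c'C [sc'E leafE]] := star_component c.
have c'c : c' = c.
  by apply/eqP; rewrite eq_sym; apply: contraLR cC => /(leafE _ (connect0 _ _)) [].
subst c'.
split => // w acw.
have w_neq_c : w != c by apply: contraTneq acw => ->; rewrite adj_irr.
by have [] := leafE w _ w_neq_c; first by rewrite connect1 ?sc'E.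
Qed.

Definition center_of v := odflt v [pick c | s v c].

Lemma center_of_leaf v : v \notin C ->
  center_of v \in C /\ forall w, s v w = (w == center_of v).
Proof.
move=> vC; have [c cC [_ leafE]] := star_component v.
have v_neq_c : v != c by apply: contraNneq vC => ->.
have [_ svE] := leafE v (connect0 _ _) v_neq_c.
rewrite /center_of; case: pickP => [c' /=|/(_ c)]; last by rewrite svE eqxx.
by rewrite svE => /eqP ->.
Qed.

Lemma adj_center_of v : v \notin C -> adj v (center_of v).
Proof.
by move=> vC; have [s_sym s_adj _] := psp; apply: s_adj; rewrite (center_of_leaf vC).2.
Qed.

Lemma center_of_adj_center v c : adj v c -> c \in C -> center_of v = c.
Proof.
move=> avc cC; have [s_sym _ _] := psp.
have vC : v \notin C by apply: (center_star cC).2; rewrite adj_sym.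
by apply/esym/eqP; rewrite -(center_of_leaf vC).2 s_sym (center_star cC).1 adj_sym.
Qed.

Variable rot : V -> V -> V.
Hypothesis rs : rotation_system adj rot.

Definition lnext v := rot v (center_of v).
Definition lprev v := rot v (lnext v).

Lemma leaf_rotation v : v \notin C ->
  [/\ adj v (lnext v), adj v (lprev v),
      uniq [:: center_of v; lnext v; lprev v] & rot v (lprev v) = center_of v].
Proof.
move=> vC; have avc := adj_center_of vC.
have av_next := adj_rot rs avc.
split; [done | exact: (adj_rot rs av_next) | exact: (uniq_rot_orbit cub rs avc) |
  exact: (rot3K cub rs avc)].
Qed.

Lemma lnext_leaf v : v \notin C -> lnext v \notin C.
Proof.
move=> vC; have [av_next _ uniq_nb _] := leaf_rotation vC.
apply: contraL uniq_nb => /(center_of_adj_center av_next) <-; by rewrite /= inE eqxx.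
Qed.

Lemma lprev_leaf v : v \notin C -> lprev v \notin C.
Proof.
move=> vC; have [_ av_prev uniq_nb _] := leaf_rotation vC.
apply: contraL uniq_nb => /(center_of_adj_center av_prev) <-; by rewrite /= !inE eqxx !orbT.
Qed.

Lemma del_centers_sym : symmetric (del_rel adj C).
Proof. by move=> v w; rewrite /del_rel adj_sym [(v \notin C) && _]andbC. Qed.

Lemma del_centersE v w : v \notin C ->
  del_rel adj C v w = (w == lnext v) || (w == lprev v).
Proof.
move=> vC; rewrite /del_rel vC /=.
have [av_next av_prev _ _] := leaf_rotation vC.
apply/andP/orP => [[avw wC]|[] /eqP ->]; last first.
- by rewrite av_prev lprev_leaf.
- by rewrite av_next lnext_leaf.
have := mem_rot_orbit cub rs (adj_center_of vC) avw.
rewrite !in_cons in_nil orbF => /or3P[] /eqP w_eq; rewrite w_eq; [|by left|by right].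
by move: wC; rewrite w_eq (center_of_leaf vC).1.
Qed.

Lemma del_centers_component_cycle x : x \in ~: C ->
  is_cycle (del_rel adj C) [set y | connect (del_rel adj C) x y].
Proof.
apply: (component_two_regular_cycle (a := lnext) (b := lprev)).
- exact: del_centers_sym.
- by move=> v; rewrite /del_rel adj_irr.
- by move=> v w /and3P[_ vC _]; rewrite inE.
- by move=> v; rewrite in_setC => vC w; apply: del_centersE.
- move=> v; rewrite in_setC => /leaf_rotation[_ _ uniq_nb _].
  by move: uniq_nb; rewrite /= !inE => /and3P[].
Qed.

Lemma rot_eq_lnext v y : v \notin C -> adj v y -> rot v y = lnext v -> y = center_of v.
Proof.
by move=> vC avy; apply: (rot_inj_adj cub rs); rewrite /= ?unfold_in ?adj_center_of.
Qed.

Definition paired_leaves := [set v in ~: C | lnext (lnext v) == v].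
Definition face_leaves := [set v in ~: C | lprev (lnext v) == v].
Definition face_partner v := rot (center_of (lnext v)) (lnext v).

Lemma in_paired_leaves v : (v \in paired_leaves) = (v \notin C) && (lnext (lnext v) == v).
Proof. by rewrite 2!in_set. Qed.

Lemma in_face_leaves v : (v \in face_leaves) = (v \notin C) && (lprev (lnext v) == v).
Proof. by rewrite 2!in_set. Qed.

Hypothesis phf : pent_hex_faces adj rot.

Local Notation fs := (face_step rot).

Lemma face_leaves_three_steps v : v \in face_leaves ->
  let x := face_partner v in
  x \notin C /\ iter 3 fs (v, lnext v) = (x, lnext x).
Proof.
rewrite in_face_leaves => /andP[vC /eqP prev_w] x.
have wC := lnext_leaf vC; have cC := (center_of_leaf wC).1.
have acx : adj (center_of (lnext v)) x.
  by apply: (adj_rot rs); rewrite adj_sym adj_center_of.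
have xC := (center_star cC).2 _ acx.
have [_ _ _ rot_prev] := leaf_rotation wC.
have rot_wv : rot (lnext v) v = center_of (lnext v) by rewrite -{2}prev_w rot_prev.
have center_x : center_of x = center_of (lnext v).
  by apply: center_of_adj_center cC; rewrite adj_sym.
by split=> //; rewrite /= /face_step /= rot_wv /lnext center_x.
Qed.

Lemma face_partner_spec v : v \in face_leaves ->
  [/\ face_partner v \in face_leaves, face_partner (face_partner v) = v &
      face_partner v != v].
Proof.
move=> vF; have vC : v \notin C by move: vF; rewrite in_face_leaves => /andP[].
have [xC face3] := face_leaves_three_steps vF.
set x := face_partner v in xC face3 *; set z := lnext x.
have zC : z \notin C := lnext_leaf xC.
have dD : (v, lnext v) \in darts adj by rewrite inE; have [] := leaf_rotation vC.
have dart_from_x n : iter n fs (x, z) \in darts adj.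
  by rewrite -face3 -iterD; apply: iter_face_step_dart.
have [face_len _] := phf dD; rewrite card_face_of in face_len.
have := iter_face_order cub rs adj_sym dD.
case: face_len => face_n; rewrite face_n; [rewrite -[5]/(2 + 3) | rewrite -[6]/(3 + 3)];
  rewrite iterD face3 /= /face_step /=.
  move=> [zx_v]; rewrite zx_v => rot_vz.
  have := dart_from_x 1; rewrite inE /= zx_v adj_sym => avz.
  by move: zC; rewrite (rot_eq_lnext vC avz rot_vz) (center_of_leaf vC).1.
set y := rot z x => -[yz_v]; rewrite yz_v => rot_vy.
have := dart_from_x 2; rewrite inE /= yz_v adj_sym => avy.
have yC : y \in C.
  have -> : y = center_of v by exact: rot_eq_lnext vC avy rot_vy.
  exact: (center_of_leaf vC).1.
have azy : adj z y by have := dart_from_x 1; rewrite inE.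
have x_prev : x = lprev z.
  have [_ az_prev _ rot_prev] := leaf_rotation zC.
  apply: (rot_inj_adj cub rs (v := z)); rewrite ?unfold_in //.
    by have := dart_from_x 0; rewrite inE adj_sym.
  by rewrite rot_prev (center_of_adj_center azy yC).
split.
- by rewrite in_face_leaves xC -x_prev /=.
- by rewrite /face_partner (center_of_adj_center azy yC).
- have := face_vertex_neq phf (i := 0) (k := 3) dD.
  by rewrite face3 face_n eq_sym => ->.
Qed.

Lemma face_leavesE v : v \notin C -> (v \in face_leaves) = (v \notin paired_leaves).
Proof.
move=> vC; have wC := lnext_leaf vC; rewrite in_face_leaves in_paired_leaves vC /=.
have [_ _ uniq_nb _] := leaf_rotation wC.
have next_neq_prev : lnext (lnext v) != lprev (lnext v).
  by move: uniq_nb; rewrite /= !inE => /and3P[].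
have : del_rel adj C (lnext v) v by rewrite del_centers_sym del_centersE ?eqxx.
rewrite del_centersE //; set w := lnext v in next_neq_prev *.
by case/orP => /eqP ->; rewrite eqxx ?(negPf next_neq_prev) // eq_sym (negPf next_neq_prev).
Qed.

Lemma leaves_even : ~~ odd #|~: C|.
Proof.
have paired_sub : ~: C :&: paired_leaves = paired_leaves.
  by apply/setIidPr/subsetP => v; rewrite in_paired_leaves in_setC => /andP[].
have face_diff : ~: C :\: paired_leaves = face_leaves.
  apply/setP => v; rewrite in_setD in_setC andbC.
  by case: (boolP (v \in C)) => [vC|/face_leavesE ->]; rewrite ?in_face_leaves ?vC.
have paired_even : ~~ odd #|paired_leaves|.
  apply: (involution_card_even (f := lnext)) => v; rewrite in_paired_leaves.
  - by case/andP => vC /eqP next2; rewrite in_paired_leaves lnext_leaf // next2 /=.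
  - by case/andP => _ /eqP.
  - case/andP => vC _; have [av_next _ _ _] := leaf_rotation vC.
    by apply: contraTneq av_next => ->; rewrite adj_irr.
have face_even : ~~ odd #|face_leaves|.
  by apply: (involution_card_even (f := face_partner)) => v /face_partner_spec[].
rewrite -(cardsID paired_leaves) paired_sub face_diff oddD.
by rewrite (negPf paired_even) (negPf face_even).
Qed.

End StarPacking.

Theorem mainTheorem11 (V : finType) (adj : rel V) (s : rel V) :
  fullerene adj -> perfect_star_packing adj s ->
  forall X : {set {set V}},
    (forall K : {set V}, K \in X <->
       [/\ K \in components (del_rel adj (centers s)) (~: centers s),
           is_cycle (del_rel adj (centers s)) K & odd #|K| ]) ->
    ~~ odd #|X|.
Proof.
move=> [[adj_sym adj_irr] _ cub [rot [rs _ phf]]] psp X X_odd_cycles.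
set r := del_rel adj (centers s) in X_odd_cycles.
set P := components r (~: centers s) in X_odd_cycles.
have P_cycles K : K \in P -> is_cycle r K.
  case/imsetP => x xL ->.
  exact: (del_centers_component_cycle adj_sym adj_irr cub psp rs).
have -> : X = [set K in P | odd #|K|].
  apply/setP => K; rewrite inE; apply/idP/andP => [/X_odd_cycles[]|[KP oddK]] //.
  by apply/X_odd_cycles; split => //; apply: P_cycles.
have P_partition : partition P (~: centers s).
  have r_csym : connect_sym r by apply/sym_connect_sym/del_centers_sym.
  apply: (partition_components r_csym).
  by apply: (intro_closed r_csym) => u w /and3P[_ _]; rewrite !in_setC.
rewrite -odd_sum_card -(card_partition P_partition).
exact: (leaves_even adj_sym adj_irr cub psp rs phf).
Qed.
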